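(* Let $\mu=\sum_{i=1}^m a_i\delta_{u_i}$ and $\nu=\sum_{j=1}^n b_j\delta_{v_j}$ be finitely supported finite measures on $S^2\subset\mathbb{R}^3$ (with $a_i,b_j>0$, $u_i,v_j\in S^2$), and let $(\gamma_0,\gamma_1)\in\Gamma(\mu,\nu)$. Then there exists a discrete semi-coupling $(A,B)\in\mathcal A(\mu,\nu)$ such that $$\int_{S^2\times S^2}\Big|\sqrt{\tfrac{d\gamma_0}{d\gamma}(u,v)}\,u-\sqrt{\tfrac{d\gamma_1}{d\gamma}(u,v)}\,v\Big|^2d\gamma(u,v)=\sum_{i=0}^m\sum_{j=0}^n\big|\sqrt{A_{ij}}\,u_i-\sqrt{B_{ij}}\,v_j\big|^2,$$ where $u_0=v_0=(1,0,0)\in S^2$ and $\gamma$ is a measure on $S^2\times S^2$ with $\gamma_0,\gamma_1\ll\gamma$.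
   Context: $\Gamma(\mu,\nu)$ is the set of pairs $(\gamma_0,\gamma_1)$ of finite Borel measures on $S^2\times S^2$ with $(\operatorname{Proj}_0)_\#\gamma_0=\mu$ and $(\operatorname{Proj}_1)_\#\gamma_1=\nu$. $\mathcal A(\mu,\nu)$ is the set of pairs $(A,B)$ of $(m+1)\times(n+1)$ matrices (indices $i=0,\dots,m$, $j=0,\dots,n$) with: $A_{ij},B_{ij}\ge0$; $a_i=\sum_{j=0}^nA_{ij}$ for $i=1,\dots,m$; $A_{0j}=0$ for all $j$; $b_j=\sum_{i=0}^mB_{ij}$ for $j=1,\dots,n$; $B_{i0}=0$ for all $i$. *)

From HB Require Import structures.
From mathcomp Require Import all_boot all_order all_algebra.
From mathcomp Require Import all_classical all_reals all_analysis.
Set Implicit Arguments. Unset Strict Implicit. Unset Printing Implicit Defensive.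
Import Order.TTheory GRing.Theory Num.Theory.
Local Open Scope ring_scope.
Local Open Scope classical_set_scope.

(* Points of R^3 are represented as ((x, y), z) : (R * R) * R, equipped with the
   product (= Borel) sigma-algebra. *)
Definition R3 (R : realType) := ((R * R) * R)%type.

Definition vec3 (R : realType) (x y z : R) : R3 R := ((x, y), z).
Definition cx (R : realType) (p : R3 R) : R := p.1.1.
Definition cy (R : realType) (p : R3 R) : R := p.1.2.
Definition cz (R : realType) (p : R3 R) : R := p.2.

Definition sqdist3 (R : realType) (s : R) (p : R3 R) (t : R) (q : R3 R) : R :=
  (s * cx p - t * cx q) ^+ 2 + (s * cy p - t * cy q) ^+ 2 + (s * cz p - t * cz q) ^+ 2.

Definition S2 (R : realType) : set (R3 R) :=
  [set p | cx p ^+ 2 + cy p ^+ 2 + cz p ^+ 2 = 1].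

Definition e1 (R : realType) : R3 R := vec3 1 0 0.

(* extended point lists: index 0 is (1,0,0), index i+1 is u i *)
Definition ext_pts (R : realType) (m : nat) (u : 'I_m -> R3 R) (i : 'I_m.+1) : R3 R :=
  match unlift ord0 i with Some i' => u i' | None => e1 R end.

Definition discrete_semicoupling (R : realType) (m n : nat)
  (a : 'I_m -> R) (b : 'I_n -> R) (A B : 'M[R]_(m.+1, n.+1)) : Prop :=
  (forall i j, 0 <= A i j) /\ (forall i j, 0 <= B i j) /\
  (forall i : 'I_m, a i = \sum_(j < n.+1) A (lift ord0 i) j) /\
  (forall j, A ord0 j = 0) /\
  (forall j : 'I_n, b j = \sum_(i < m.+1) B i (lift ord0 j)) /\
  (forall i, B i ord0 = 0).

From HB Require Import structures.
From mathcomp Require Import all_boot all_order all_algebra.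
From mathcomp Require Import all_classical all_reals all_analysis.
From mathcomp Require Import measurable_realfun ring.
Import Order.TTheory GRing.Theory Num.Theory.
Local Open Scope ring_scope.
Local Open Scope classical_set_scope.
Local Open Scope charge_scope.
Set Implicit Arguments.
Unset Strict Implicit.

(* Let P and Q be the finite supports of mu and nu. As the marginals of gamma0 and
   gamma1 are mu and nu, gamma0 lives on P x S^2 and gamma1 on S^2 x Q, so gamma-a.e.
   off P x Q one of the densities d gamma0/d gamma, d gamma1/d gamma vanishes; there the
   integrand is the sum of the two densities, because the points are unit vectors, and
   the integral over E = (S^2 x S^2) \ (P x Q) is gamma0(E) + gamma1(E).  On an atom
   x = (u_i, v_j) the integrand times gamma{x} is, by 2-homogeneity,
   |sqrt(gamma0{x}) u_i - sqrt(gamma1{x}) v_j|^2.  Hence A_ij = gamma0{(u_i, v_j)},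
   B_ij = gamma1{(u_i, v_j)} for i, j >= 1 work, once the leftover masses
   a_i - sum_j A_ij and b_j - sum_i B_ij, which add up to gamma0(E) and gamma1(E), are put
   in column and row 0: there the other coefficient is 0, so each such term is just the
   leftover mass. *)

Section fiber_weights.
Variables (R : numFieldType) (X : eqType) (I : finType).
Implicit Types (c : I -> R) (p : I -> X).

Definition fiber_mass c p (y : X) : R := \sum_(i | p i == y) c i.

Definition fiber_share c p (i : I) : R := c i / fiber_mass c p (p i).

Definition indic_weights c p (S : set X) :=
  forall x, \sum_i c i * (p i == x)%:R = \1_S x.

Lemma sum_weights_fiber c p x :
  \sum_i c i * (p i == x)%:R = \sum_(i | p i == x) c i.
Proof.
by rewrite [RHS]big_mkcond; apply: eq_bigr => i _; case: eqP; rewrite ?mulr1 ?mulr0.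
Qed.

Variables (c : I -> R) (p : I -> X).
Hypothesis c_gt0 : forall i, 0 < c i.

Lemma fiber_mass_gt0 i : 0 < fiber_mass c p (p i).
Proof.
rewrite /fiber_mass (bigD1 i) //= ltr_wpDr // ?c_gt0 //.
by apply: sumr_ge0 => j _; exact: ltW.
Qed.

Lemma fiber_share_ge0 i : 0 <= fiber_share c p i.
Proof. by rewrite divr_ge0 // ltW // ?fiber_mass_gt0. Qed.

Lemma fiber_shareK i : fiber_share c p i * fiber_mass c p (p i) = c i.
Proof. by rewrite divfK // gt_eqF // fiber_mass_gt0. Qed.

Lemma indic_weights_share : indic_weights (fiber_share c p) p (range p).
Proof.
move=> x; rewrite sum_weights_fiber indicE.
have [[i _ <-]|nPx] := pselect (range p x); last first.
  rewrite memNset //; apply: big1 => i /eqP pix.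
  by case: nPx; exists i.
rewrite mem_set; last by exists i.
under eq_bigr => j /eqP pj do rewrite /fiber_share pj.
by rewrite -mulr_suml mulfV // gt_eqF // fiber_mass_gt0.
Qed.

End fiber_weights.

Section indic_weights_pair.
Variables (R : numFieldType) (X Y : eqType) (I J : finType).
Variables (c : I -> R) (p : I -> X) (S : set X).
Variables (d : J -> R) (q : J -> Y) (S' : set Y).
Hypothesis (cpS : indic_weights c p S) (dqS' : indic_weights d q S').

Lemma indic_weightsX :
  indic_weights (fun k => c k.1 * d k.2) (fun k => (p k.1, q k.2)) (S `*` S').
Proof.
move=> [x y]; rewrite indicE in_setX -mulnb natrM -!indicE -cpS -dqS' big_distrlr.
rewrite pair_bigA; apply: eq_bigr => -[i j] _ /=.
by rewrite xpair_eqE -mulnb natrM; ring.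
Qed.

Lemma indic_weights_set1X (x0 : X) :
  indic_weights d (fun j => (x0, q j)) ([set x0] `*` S').
Proof.
move=> [x y]; rewrite indicE in_setX in_set1 /=.
have [<-|nx] := eqVneq x0 x.
  rewrite -indicE -dqS'.
  by apply: eq_bigr => j _; rewrite xpair_eqE eqxx.
by apply: big1 => j _; rewrite xpair_eqE (negbTE nx) mulr0.
Qed.

Lemma indic_weightsX1 (y0 : Y) :
  indic_weights c (fun i => (p i, y0)) (S `*` [set y0]).
Proof.
move=> [x y]; rewrite indicE in_setX in_set1 /=.
have [<-|ny] := eqVneq y0 y.
  rewrite andbT -indicE -cpS.
  by apply: eq_bigr => i _; rewrite xpair_eqE eqxx andbT.
rewrite andbF.
by apply: big1 => i _; rewrite xpair_eqE (negbTE ny) andbF mulr0.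
Qed.

End indic_weights_pair.

Lemma measurable_set1X d1 d2 (T1 : measurableType d1) (T2 : measurableType d2) :
  (forall x : T1, measurable [set x]) -> (forall y : T2, measurable [set y]) ->
  forall z : T1 * T2, measurable [set z].
Proof.
move=> m1 m2 [x y].
have -> : [set (x, y)] = [set x] `*` [set y].
  by apply/seteqP; split => -[x' y'] /=; [case=> -> ->|case=> -> ->].
exact: measurableX.
Qed.

Lemma measure_conull d (T : measurableType d) (R : realType)
    (mu : {measure set T -> \bar R}) (A : set T) :
  measurable A -> mu (~` A) = 0%E -> mu A = mu setT.
Proof.
move=> mA muAC0; have mAC : measurable (~` A) by exact: measurableC.
by rewrite -[LHS]adde0 -muAC0 -(setUCr A) measureU ?setICr.
Qed.

Lemma integral_atom d (T : measurableType d) (R : realType)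
    (mu : {measure set T -> \bar R}) (h : T -> \bar R) x :
  measurable [set x] -> (\int[mu]_(y in [set x]) h y = h x * mu [set x])%E.
Proof.
move=> mx; rewrite -integral_cst //; apply: eq_integral => y.
by rewrite inE => ->.
Qed.

Section atomic_integral.
Context d (T : measurableType d) (R : realType).
Hypothesis measurable_set1T : forall x : T, measurable [set x].
Local Open Scope ereal_scope.

Lemma measurable_finite_range (I : finType) (p : I -> T) : measurable (range p).
Proof.
apply: countable_measurable => //; apply: finite_set_countable.
exact: finite_image.
Qed.

Lemma sigma_finite_measure_set1_fin_num
    (mu : {sigma_finite_measure set T -> \bar R}) x : mu [set x] \is a fin_num.
Proof.
have [F FT mF] := sigma_finiteT mu.
have [k _ Fkx] : (\bigcup_k F k) x by rewrite -FT.
rewrite ge0_fin_numE //; apply: le_lt_trans (mF k).2.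
by apply: le_measure; rewrite ?inE //; [exact: (mF k).1|move=> y ->].
Qed.

Variables (I : finType) (c : I -> R) (p : I -> T) (S : set T).
Hypotheses (c_ge0 : forall i, (0 <= c i)%R) (cpS : indic_weights c p S).

Lemma integral_indic_weights (mu : {measure set T -> \bar R}) (h : T -> \bar R) :
  (forall x, 0 <= h x) -> measurable_fun setT h ->
  \int[mu]_(x in S) h x = \sum_i (c i)%:E * (h (p i) * mu [set p i]).
Proof.
move=> h_ge0 mh.
have patch_ge0 (A : set T) x : 0 <= (h \_ A) x by rewrite patchE; case: ifP.
have mpatch i : measurable_fun setT (h \_ [set p i]).
  exact/(measurable_restrictT _ (measurable_set1T _))/(measurable_funS _ _ mh).
rewrite integral_mkcond.
transitivity (\int[mu]_x \sum_i (c i)%:E * (h \_ [set p i]) x).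
  apply: eq_integral => x _.
  transitivity (h x * (\sum_i c i * (p i == x)%:R)%:E).
    by rewrite cpS indicE patchE; case: ifP; rewrite ?mule1 ?mule0.
  rewrite -sumEFin ge0_sume_distrr => [|i _]; last first.
    by rewrite lee_fin mulr_ge0 // ler0n.
  apply: eq_bigr => i _; rewrite patchE in_set1 eq_sym.
  by case: eqP => [->|_]; rewrite ?mulr1 ?mulr0 ?mule0 // muleC.
rewrite ge0_integral_sum //; last 2 first.
- by move=> i; apply: emeasurable_funM => //; exact: measurable_cst.
- by move=> i x _; rewrite mule_ge0 // lee_fin.
apply: eq_bigr => i _; rewrite ge0_integralZl_EFin // -integral_mkcond.
by rewrite integral_atom.
Qed.

Lemma finite_measure_indic_weights (mu : {finite_measure set T -> \bar R}) :
  measurable S -> mu S = (\sum_i c i * fine (mu [set p i]))%:E.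
Proof.
move=> mS; rewrite -[LHS]mul1e -integral_cst //.
rewrite (integral_indic_weights mu (h := cst 1)) // -sumEFin.
by apply: eq_bigr => i _; rewrite mul1e EFinM fineK ?fin_num_measure.
Qed.

End atomic_integral.

Section Radon_Nikodym_finite_measure.
Context d (T : measurableType d) (R : realType).
Variables (nu : {finite_measure set T -> \bar R})
          (mu : {sigma_finite_measure set T -> \bar R}).
Hypothesis numu : nu `<< mu.
Local Notation rho := ('d (charge_of_finite_measure nu) '/d mu).
Local Open Scope ereal_scope.

Lemma Radon_Nikodym_fmeasure_integral E :
  measurable E -> nu E = \int[mu]_(x in E) rho x.
Proof. by move=> mE; rewrite -Radon_Nikodym_integral. Qed.

Lemma Radon_Nikodym_fmeasure_fin_num x : rho x \is a fin_num.
Proof. exact: Radon_Nikodym_fin_num. Qed.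

Lemma Radon_Nikodym_fmeasure_integrable : mu.-integrable setT rho.
Proof. exact: Radon_Nikodym_integrable. Qed.

Lemma measurable_Radon_Nikodym_fmeasure : measurable_fun setT rho.
Proof. exact: measurable_int Radon_Nikodym_fmeasure_integrable. Qed.

Lemma Radon_Nikodym_fmeasure_ge0_ae : {ae mu, forall x, 0 <= rho x}.
Proof.
apply: filterS (ae_eq_Radon_Nikodym_SigmaFinite numu measurableT) => x /(_ I) <-.
exact: Radon_Nikodym_SigmaFinite.f_ge0.
Qed.

Lemma Radon_Nikodym_fmeasure_null_ae N : measurable N -> nu N = 0 ->
  {ae mu, forall x, N x -> rho x = 0}.
Proof.
move=> mN nuN0; apply: integral_ae_eq => //.
- exact: integrableS (subsetT _) Radon_Nikodym_fmeasure_integrable.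
move=> E EN mE; rewrite integral0 -Radon_Nikodym_fmeasure_integral //.
exact: subset_measure0 nuN0.
Qed.

Lemma Radon_Nikodym_fmeasure_set1 x : measurable [set x] ->
  nu [set x] = rho x * mu [set x].
Proof.
by move=> mx; rewrite Radon_Nikodym_fmeasure_integral // integral_atom.
Qed.

Lemma measurable_sqrt_Radon_Nikodym_fmeasure :
  measurable_fun setT (fun x => Num.sqrt (fine (rho x))).
Proof.
apply: measurableT_comp (continuous_measurable_fun (@sqrt_continuous R)) _.
exact: measurableT_comp (fine_measurable measurableT) measurable_Radon_Nikodym_fmeasure.
Qed.

End Radon_Nikodym_finite_measure.

Section sqdist3.
Variable R : realType.
Implicit Types (s t k : R) (p q : R3 R).

Lemma measurable_set1_R3 p : measurable [set p].
Proof. by do 2 apply: measurable_set1X => //; exact: measurable_set1. Qed.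

Lemma measurable_set1_R3xR3 (z : (R3 R * R3 R)%type) :
  measurable [set z].
Proof. by apply: measurable_set1X => p; exact: measurable_set1_R3. Qed.

Lemma measurable_cx : measurable_fun setT (@cx R).
Proof. exact: measurableT_comp measurable_fst measurable_fst. Qed.

Lemma measurable_cy : measurable_fun setT (@cy R).
Proof. exact: measurableT_comp measurable_snd measurable_fst. Qed.

Lemma measurable_cz : measurable_fun setT (@cz R).
Proof. exact: measurable_snd. Qed.

Lemma measurable_S2 : measurable (@S2 R).
Proof.
have mc : measurable_fun setT (fun p : R3 R => cx p ^+ 2 + cy p ^+ 2 + cz p ^+ 2).
  by apply: measurable_funD; [apply: measurable_funD|]; apply: measurable_funX;
    [exact: measurable_cx|exact: measurable_cy|exact: measurable_cz].
by rewrite -[@S2 R]setTI; exact: mc measurableT _ (measurable_set1 1).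
Qed.

Lemma measurable_sqdist3 d (T : measurableType d) (s t : T -> R) (p q : T -> R3 R) :
  measurable_fun setT s -> measurable_fun setT t ->
  measurable_fun setT p -> measurable_fun setT q ->
  measurable_fun setT (fun x => sqdist3 (s x) (p x) (t x) (q x)).
Proof.
move=> ms mt mp mq.
have mcoord (c : R3 R -> R) : measurable_fun setT c ->
    measurable_fun setT (fun x => (s x * c (p x) - t x * c (q x)) ^+ 2).
  by move=> mc; apply/measurable_funX/measurable_funB;
    apply: measurable_funM => //; exact: measurableT_comp.
by apply: measurable_funD; [apply: measurable_funD|]; apply: mcoord;
  [exact: measurable_cx|exact: measurable_cy|exact: measurable_cz].
Qed.

Lemma e1_S2 : S2 (e1 R).
Proof. by rewrite /S2 /= /cx /cy /cz /= expr1n expr0n !addr0. Qed.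

Lemma sqdist3_ge0 s p t q : 0 <= sqdist3 s p t q.
Proof. by rewrite /sqdist3 !addr_ge0 ?sqr_ge0. Qed.

Lemma sqdist3_scale k s p t q :
  sqdist3 (k * s) p (k * t) q = k ^+ 2 * sqdist3 s p t q.
Proof. by rewrite /sqdist3; ring. Qed.

Lemma sqdist3_0r s p q : S2 p -> sqdist3 s p 0 q = s ^+ 2.
Proof.
rewrite /S2 /sqdist3 /= => p1.
by rewrite !mul0r !subr0 !exprMn -!mulrDr p1 mulr1.
Qed.

Lemma sqdist3_0l t p q : S2 q -> sqdist3 0 p t q = t ^+ 2.
Proof.
rewrite /S2 /sqdist3 /= => q1.
by rewrite !mul0r !sub0r !sqrrN !exprMn -!mulrDr q1 mulr1.
Qed.

Lemma sqdist3_sqrt_mulr M r0 r1 p q : 0 <= M -> 0 <= r0 * M -> 0 <= r1 * M ->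
  sqdist3 (Num.sqrt r0) p (Num.sqrt r1) q * M =
  sqdist3 (Num.sqrt (r0 * M)) p (Num.sqrt (r1 * M)) q.
Proof.
rewrite le_eqVlt => /predU1P[<- _ _|M_gt0].
  by rewrite !mulr0 sqrtr0 /sqdist3; ring.
rewrite !pmulr_lge0 // => r0_ge0 r1_ge0.
rewrite !sqrtrM //.
by rewrite ![_ * Num.sqrt M]mulrC sqdist3_scale sqr_sqrtr ?ltW // mulrC.
Qed.

Lemma sqdist3_sqrt_singular r0 r1 p q : S2 p -> S2 q -> 0 <= r0 -> 0 <= r1 ->
  r0 * r1 = 0 -> sqdist3 (Num.sqrt r0) p (Num.sqrt r1) q = r0 + r1.
Proof.
move=> p_S2 q_S2 r0_ge0 r1_ge0 /eqP; rewrite mulf_eq0 => /orP[]/eqP ->.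
  by rewrite sqrtr0 sqdist3_0l // sqr_sqrtr // add0r.
by rewrite sqrtr0 sqdist3_0r // sqr_sqrtr // addr0.
Qed.

End sqdist3.

Section slack_mx.
Variables (R : realType) (m n : nat).
Implicit Types (a : 'I_m -> R) (K : 'I_m -> 'I_n -> R) (i : 'I_m) (j : 'I_n).

Definition slack_mx a K : 'M[R]_(m.+1, n.+1) :=
  \matrix_(i, j) match unlift ord0 i, unlift ord0 j with
    | Some i', Some j' => K i' j'
    | Some i', None => a i' - \sum_j' K i' j'
    | None, _ => 0
    end.

Lemma slack_mx0j a K (j : 'I_n.+1) : slack_mx a K ord0 j = 0.
Proof. by rewrite mxE unlift_none. Qed.

Lemma slack_mxi0 a K i : slack_mx a K (lift ord0 i) ord0 = a i - \sum_j K i j.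
Proof. by rewrite mxE liftK unlift_none. Qed.

Lemma slack_mx_lift a K i j : slack_mx a K (lift ord0 i) (lift ord0 j) = K i j.
Proof. by rewrite mxE !liftK. Qed.

Lemma slack_mx_row_sum a K i : \sum_(j < n.+1) slack_mx a K (lift ord0 i) j = a i.
Proof.
rewrite big_ord_recl slack_mxi0.
rewrite [X in _ + X](eq_bigr (K i)) ?subrK // => j _.
exact: slack_mx_lift.
Qed.

Lemma slack_mx_ge0 a K : (forall i j, 0 <= K i j) -> (forall i, \sum_j K i j <= a i) ->
  forall (i : 'I_m.+1) (j : 'I_n.+1), 0 <= slack_mx a K i j.
Proof.
move=> K_ge0 K_le i j; rewrite mxE.
by case: unlift => [i'|//]; case: unlift => [j'|]; rewrite ?subr_ge0.
Qed.

End slack_mx.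

Lemma discrete_semicoupling_slack (R : realType) m n (a : 'I_m -> R) (b : 'I_n -> R)
    (K0 K1 : 'I_m -> 'I_n -> R) :
  (forall i j, 0 <= K0 i j) -> (forall i j, 0 <= K1 i j) ->
  (forall i, \sum_j K0 i j <= a i) -> (forall j, \sum_i K1 i j <= b j) ->
  discrete_semicoupling a b (slack_mx a K0) (slack_mx b (fun j i => K1 i j))^T.
Proof.
move=> K0_ge0 K1_ge0 K0_le K1_le.
split; first exact: slack_mx_ge0.
split; first by move=> i j; rewrite mxE; exact: slack_mx_ge0.
split; first by move=> i; rewrite slack_mx_row_sum.
split; first exact: slack_mx0j.
split; first by move=> j; under eq_bigr do rewrite mxE; rewrite slack_mx_row_sum.
by move=> i; rewrite mxE slack_mx0j.
Qed.

Lemma ext_pts0 (R : realType) m (w : 'I_m -> R3 R) : ext_pts w ord0 = e1 R.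
Proof. by rewrite /ext_pts unlift_none. Qed.

Lemma ext_pts_lift (R : realType) m (w : 'I_m -> R3 R) i : ext_pts w (lift ord0 i) = w i.
Proof. by rewrite /ext_pts liftK. Qed.

Lemma sum_sqdist3_slack (R : realType) m n (a : 'I_m -> R) (u : 'I_m -> R3 R)
    (b : 'I_n -> R) (v : 'I_n -> R3 R) (K0 K1 : 'I_m -> 'I_n -> R) :
  (forall i, S2 (u i)) -> (forall j, S2 (v j)) ->
  (forall i, \sum_j K0 i j <= a i) -> (forall j, \sum_i K1 i j <= b j) ->
  let A := slack_mx a K0 in let B := (slack_mx b (fun j i => K1 i j))^T in
  \sum_(i < m.+1) \sum_(j < n.+1)
     sqdist3 (Num.sqrt (A i j)) (ext_pts u i) (Num.sqrt (B i j)) (ext_pts v j) =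
  \sum_i (a i - \sum_j K0 i j) + \sum_j (b j - \sum_i K1 i j) +
  \sum_i \sum_j sqdist3 (Num.sqrt (K0 i j)) (u i) (Num.sqrt (K1 i j)) (v j).
Proof.
move=> u_S2 v_S2 K0_le K1_le A B.
have BE i j : B i j = slack_mx b (fun j i => K1 i j) j i by rewrite mxE.
have row0 : \sum_(j < n.+1)
    sqdist3 (Num.sqrt (A ord0 j)) (ext_pts u ord0) (Num.sqrt (B ord0 j)) (ext_pts v j) =
    \sum_j (b j - \sum_i K1 i j).
  rewrite big_ord_recl BE !slack_mx0j sqrtr0 !ext_pts0 (sqdist3_0l _ _ (e1_S2 R)).
  rewrite expr0n add0r.
  apply: eq_bigr => j _; rewrite slack_mx0j sqrtr0 ext_pts_lift sqdist3_0l //.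
  by rewrite BE slack_mxi0 sqr_sqrtr // subr_ge0.
have row_lift i : \sum_(j < n.+1) sqdist3 (Num.sqrt (A (lift ord0 i) j))
      (ext_pts u (lift ord0 i)) (Num.sqrt (B (lift ord0 i) j)) (ext_pts v j) =
    a i - \sum_j K0 i j +
    \sum_j sqdist3 (Num.sqrt (K0 i j)) (u i) (Num.sqrt (K1 i j)) (v j).
  rewrite big_ord_recl BE slack_mx0j sqrtr0 !ext_pts_lift sqdist3_0r //.
  rewrite slack_mxi0 sqr_sqrtr ?subr_ge0 //; congr (_ + _).
  by apply: eq_bigr => j _; rewrite BE !slack_mx_lift ext_pts_lift.
rewrite big_ord_recl row0 (eq_bigr _ (fun i _ => row_lift i)).
by rewrite [\sum_(i < m) (_ + _)]big_split addrCA addrA.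
Qed.

(* The u_i (and the v_j) need not be distinct: the mass of the atom (u_i, v_j) is shared
   among all index pairs carrying that pair of points, in proportion to a_i * b_j. *)
Definition atom_split (R : realType) m n (gamma : set (R3 R * R3 R)%type -> \bar R)
    (a : 'I_m -> R) (u : 'I_m -> R3 R) (b : 'I_n -> R) (v : 'I_n -> R3 R) i j : R :=
  fine (gamma [set (u i, v j)]) * (fiber_share a u i * fiber_share b v j).

Lemma atom_split_ge0 (R : realType) m n
    (gamma : {measure set (R3 R * R3 R)%type -> \bar R})
    (a : 'I_m -> R) (u : 'I_m -> R3 R) (b : 'I_n -> R) (v : 'I_n -> R3 R) :
  (forall i, 0 < a i) -> (forall j, 0 < b j) ->
  forall i j, 0 <= atom_split gamma a u b v i j.
Proof.
move=> a_gt0 b_gt0 i j; apply: mulr_ge0; first by rewrite fine_ge0 // measure_ge0.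
by apply: mulr_ge0; exact: fiber_share_ge0.
Qed.

Section semicoupling.
Variables (R : realType) (m n : nat).
Variables (a : 'I_m -> R) (u : 'I_m -> R3 R) (b : 'I_n -> R) (v : 'I_n -> R3 R).
Hypotheses (a_gt0 : forall i, 0 < a i) (b_gt0 : forall j, 0 < b j).
Hypotheses (u_S2 : forall i, S2 (u i)) (v_S2 : forall j, S2 (v j)).
Variables (gamma0 gamma1 : {finite_measure set (R3 R * R3 R)%type -> \bar R}).
Hypotheses (gamma0_S2 : gamma0 (~` (@S2 R `*` @S2 R)) = 0%E)
           (gamma1_S2 : gamma1 (~` (@S2 R `*` @S2 R)) = 0%E).
Hypothesis gamma0_fst : forall X : set (R3 R), measurable X ->
  gamma0 (X `*` setT) = (\sum_(i < m) ((a i)%:E * \d_(u i) X))%E.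
Hypothesis gamma1_snd : forall Y : set (R3 R), measurable Y ->
  gamma1 (setT `*` Y) = (\sum_(j < n) ((b j)%:E * \d_(v j) Y))%E.

Let D := @S2 R `*` @S2 R.
Let PQ := range u `*` range v.
Let E := D `\` PQ.
Let K0 := atom_split gamma0 a u b v.
Let K1 := atom_split gamma1 a u b v.

Let mD : measurable D.
Proof. by apply: measurableX; exact: measurable_S2. Qed.

Let mPQ : measurable PQ.
Proof.
by apply: measurableX; apply: measurable_finite_range => p; exact: measurable_set1_R3.
Qed.

Let mE : measurable E. Proof. exact: measurableD. Qed.

Let PQ_sub_D : PQ `<=` D.
Proof. by move=> [x y] [] /= [i _ <-] [j _ <-]; split; [exact: u_S2|exact: v_S2]. Qed.

Let fiber_share_a_ge0 i : 0 <= fiber_share a u i. Proof. exact: fiber_share_ge0. Qed.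

Let fiber_share_b_ge0 j : 0 <= fiber_share b v j. Proof. exact: fiber_share_ge0. Qed.

Lemma gamma0_set1X y : gamma0 ([set y] `*` setT) = (fiber_mass a u y)%:E.
Proof.
rewrite gamma0_fst; last exact: measurable_set1_R3.
rewrite /fiber_mass -sumEFin [RHS]big_mkcond.
by apply: eq_bigr => i _; rewrite diracE in_set1; case: eqP; rewrite ?mule1 ?mule0.
Qed.

Lemma gamma1_setX1 y : gamma1 (setT `*` [set y]) = (fiber_mass b v y)%:E.
Proof.
rewrite gamma1_snd; last exact: measurable_set1_R3.
rewrite /fiber_mass -sumEFin [RHS]big_mkcond.
by apply: eq_bigr => j _; rewrite diracE in_set1; case: eqP; rewrite ?mule1 ?mule0.
Qed.

Lemma gamma0_outside : gamma0 (~` range u `*` setT) = 0%E.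
Proof.
rewrite gamma0_fst; last first.
  by apply/measurableC/measurable_finite_range => p; exact: measurable_set1_R3.
by apply: big1 => i _; rewrite diracE memNset ?mule0 //= => -[]; exists i.
Qed.

Lemma gamma1_outside : gamma1 (setT `*` ~` range v) = 0%E.
Proof.
rewrite gamma1_snd; last first.
  by apply/measurableC/measurable_finite_range => p; exact: measurable_set1_R3.
by apply: big1 => j _; rewrite diracE memNset ?mule0 //= => -[]; exists j.
Qed.

Lemma gamma0_D : gamma0 D = (\sum_i a i)%:E.
Proof.
have -> : gamma0 D = gamma0 setT by exact: measure_conull.
rewrite -setXTT gamma0_fst // -sumEFin.
by apply: eq_bigr => i _; rewrite diracT mule1.
Qed.

Lemma gamma1_D : gamma1 D = (\sum_j b j)%:E.
Proof.
have -> : gamma1 D = gamma1 setT by exact: measure_conull.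
rewrite -setXTT gamma1_snd // -sumEFin.
by apply: eq_bigr => j _; rewrite diracT mule1.
Qed.

Lemma atom_split0_row_le i : \sum_j K0 i j <= a i.
Proof.
have m_ui : measurable [set u i] by exact: measurable_set1_R3.
have m_slice : measurable ([set u i] `*` range v).
  by apply: measurableX => //; apply: measurable_finite_range => p;
    exact: measurable_set1_R3.
have slice : gamma0 ([set u i] `*` range v) =
    (\sum_j fiber_share b v j * fine (gamma0 [set (u i, v j)]))%:E.
  apply: finite_measure_indic_weights => //; first exact: measurable_set1_R3xR3.
  by apply: indic_weights_set1X; exact: indic_weights_share.
have : (gamma0 ([set u i] `*` range v) <= gamma0 ([set u i] `*` setT))%E.
  by apply: le_measure; rewrite ?inE //; [exact: measurableX|move=> x []].
rewrite slice gamma0_set1X lee_fin => slice_le.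
have -> : \sum_j K0 i j =
    fiber_share a u i * \sum_j fiber_share b v j * fine (gamma0 [set (u i, v j)]).
  by rewrite mulr_sumr; apply: eq_bigr => j _; rewrite /K0 /atom_split; ring.
by rewrite -(fiber_shareK u a_gt0 i) ler_wpM2l.
Qed.

Lemma atom_split1_col_le j : \sum_i K1 i j <= b j.
Proof.
have m_vj : measurable [set v j] by exact: measurable_set1_R3.
have m_slice : measurable (range u `*` [set v j]).
  by apply: measurableX => //; apply: measurable_finite_range => p;
    exact: measurable_set1_R3.
have slice : gamma1 (range u `*` [set v j]) =
    (\sum_i fiber_share a u i * fine (gamma1 [set (u i, v j)]))%:E.
  apply: finite_measure_indic_weights => //; first exact: measurable_set1_R3xR3.
  by apply: indic_weightsX1; exact: indic_weights_share.
have : (gamma1 (range u `*` [set v j]) <= gamma1 (setT `*` [set v j]))%E.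
  by apply: le_measure; rewrite ?inE //; [exact: measurableX|move=> x []].
rewrite slice gamma1_setX1 lee_fin => slice_le.
have -> : \sum_i K1 i j =
    fiber_share b v j * \sum_i fiber_share a u i * fine (gamma1 [set (u i, v j)]).
  by rewrite mulr_sumr; apply: eq_bigr => i _; rewrite /K1 /atom_split; ring.
by rewrite -(fiber_shareK v b_gt0 j) ler_wpM2l.
Qed.

Lemma gamma0_PQ : gamma0 PQ = (\sum_i \sum_j K0 i j)%:E.
Proof.
have -> : gamma0 PQ = (\sum_(k : 'I_m * 'I_n)
    fiber_share a u k.1 * fiber_share b v k.2 * fine (gamma0 [set (u k.1, v k.2)]))%:E.
  apply: finite_measure_indic_weights => //; first exact: measurable_set1_R3xR3.
  - by move=> k; exact: mulr_ge0.
  - by apply: indic_weightsX; exact: indic_weights_share.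
rewrite pair_bigA; congr EFin; apply: eq_bigr => -[i j] _.
by rewrite /K0 /atom_split mulrC.
Qed.

Lemma gamma1_PQ : gamma1 PQ = (\sum_i \sum_j K1 i j)%:E.
Proof.
have -> : gamma1 PQ = (\sum_(k : 'I_m * 'I_n)
    fiber_share a u k.1 * fiber_share b v k.2 * fine (gamma1 [set (u k.1, v k.2)]))%:E.
  apply: finite_measure_indic_weights => //; first exact: measurable_set1_R3xR3.
  - by move=> k; exact: mulr_ge0.
  - by apply: indic_weightsX; exact: indic_weights_share.
rewrite pair_bigA; congr EFin; apply: eq_bigr => -[i j] _.
by rewrite /K1 /atom_split mulrC.
Qed.

Lemma gamma0_E : gamma0 E = (\sum_i (a i - \sum_j K0 i j))%:E.
Proof.
have -> : gamma0 E = (gamma0 D - gamma0 PQ)%E.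
  rewrite -[in RHS](setIidr PQ_sub_D); apply: measureD => //.
  by rewrite -ge0_fin_numE //; exact: fin_num_measure.
by rewrite gamma0_D gamma0_PQ -EFinB sumrB.
Qed.

Lemma gamma1_E : gamma1 E = (\sum_j (b j - \sum_i K1 i j))%:E.
Proof.
have -> : gamma1 E = (gamma1 D - gamma1 PQ)%E.
  rewrite -[in RHS](setIidr PQ_sub_D); apply: measureD => //.
  by rewrite -ge0_fin_numE //; exact: fin_num_measure.
by rewrite gamma1_D gamma1_PQ -EFinB sumrB exchange_big.
Qed.

Section cost.
Variable gamma : {sigma_finite_measure set (R3 R * R3 R)%type -> \bar R}.
Hypotheses (gamma0_ac : gamma0 `<< gamma) (gamma1_ac : gamma1 `<< gamma).
Local Notation rho0 := ('d (charge_of_finite_measure gamma0) '/d gamma).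
Local Notation rho1 := ('d (charge_of_finite_measure gamma1) '/d gamma).
Let cost x := sqdist3 (Num.sqrt (fine (rho0 x))) x.1 (Num.sqrt (fine (rho1 x))) x.2.

Let measurable_cost : measurable_fun setT (fun x => (cost x)%:E).
Proof.
apply/measurable_EFinP; apply: measurable_sqdist3 => //;
  exact: measurable_sqrt_Radon_Nikodym_fmeasure.
Qed.

Lemma cost_atom z : ((cost z)%:E * gamma [set z])%E =
  (sqdist3 (Num.sqrt (fine (gamma0 [set z]))) z.1
           (Num.sqrt (fine (gamma1 [set z]))) z.2)%:E.
Proof.
have mz := measurable_set1_R3xR3 z.
have gz : gamma [set z] = (fine (gamma [set z]))%:E.
  rewrite fineK //; apply: sigma_finite_measure_set1_fin_num.
  exact: measurable_set1_R3xR3.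
have atomE (nu : {finite_measure set (R3 R * R3 R)%type -> \bar R}) :
    nu `<< gamma -> fine (nu [set z]) =
    fine ('d (charge_of_finite_measure nu) '/d gamma z) * fine (gamma [set z]).
  move=> nu_ac; rewrite (Radon_Nikodym_fmeasure_set1 nu_ac mz) fineM //.
    exact: Radon_Nikodym_fmeasure_fin_num.
  by rewrite gz.
by rewrite gz -EFinM sqdist3_sqrt_mulr -?atomE ?fine_ge0 ?measure_ge0.
Qed.

Lemma integral_cost_PQ : (\int[gamma]_(x in PQ) (cost x)%:E =
  (\sum_i \sum_j sqdist3 (Num.sqrt (K0 i j)) (u i) (Num.sqrt (K1 i j)) (v j))%:E)%E.
Proof.
have -> : (\int[gamma]_(x in PQ) (cost x)%:E =
    (\sum_(k : 'I_m * 'I_n) (fiber_share a u k.1 * fiber_share b v k.2)%:E *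
       ((cost (u k.1, v k.2))%:E * gamma [set (u k.1, v k.2)])))%E.
  apply: integral_indic_weights => //; first exact: measurable_set1_R3xR3.
  - by move=> k; exact: mulr_ge0.
  - by apply: indic_weightsX; exact: indic_weights_share.
  - by move=> x; rewrite lee_fin sqdist3_ge0.
rewrite pair_bigA -sumEFin; apply: eq_bigr => -[i j] _ /=.
have W_ge0 : 0 <= fiber_share a u i * fiber_share b v j by exact: mulr_ge0.
have atom_ge0 (nu : {finite_measure set (R3 R * R3 R)%type -> \bar R}) :
    0 <= fine (nu [set (u i, v j)]) * (fiber_share a u i * fiber_share b v j).
  by rewrite mulr_ge0 // fine_ge0 // measure_ge0.
by rewrite cost_atom -EFinM /K0 /K1 /atom_split -sqdist3_sqrt_mulr // mulrC.
Qed.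

Lemma cost_E_ae : {ae gamma, forall x, E x -> (cost x)%:E = (rho0 x + rho1 x)%E}.
Proof.
have m_range (w : 'I_ _ -> R3 R) : measurable (~` range w).
  by apply/measurableC/measurable_finite_range => p; exact: measurable_set1_R3.
have h0 : {ae gamma, forall x,
    ((~` range u `*` setT) x -> rho0 x = 0%E) /\ (0 <= rho0 x)%E}.
  have null0 := Radon_Nikodym_fmeasure_null_ae gamma0_ac
    (measurableX (m_range _ u) measurableT) gamma0_outside.
  by apply: filterS2 null0 (Radon_Nikodym_fmeasure_ge0_ae gamma0_ac) => x ? ?; split.
have h1 : {ae gamma, forall x,
    ((setT `*` ~` range v) x -> rho1 x = 0%E) /\ (0 <= rho1 x)%E}.
  have null1 := Radon_Nikodym_fmeasure_null_ae gamma1_ac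
    (measurableX measurableT (m_range _ v)) gamma1_outside.
  by apply: filterS2 null1 (Radon_Nikodym_fmeasure_ge0_ae gamma1_ac) => x ? ?; split.
apply: filterS2 h0 h1 => x [null0 rho0_ge0] [null1 rho1_ge0] [[x1_S2 x2_S2] x_notPQ].
rewrite -(fineK (Radon_Nikodym_fmeasure_fin_num gamma0_ac x)).
rewrite -(fineK (Radon_Nikodym_fmeasure_fin_num gamma1_ac x)) -EFinD.
congr EFin; apply: sqdist3_sqrt_singular => //; try exact: fine_ge0.
have [x1_P|x1_notP] := pselect (range u x.1); last by rewrite null0 // mul0r.
by rewrite null1 ?mulr0 //; split => // x2_Q; apply: x_notPQ.
Qed.

Lemma integral_cost_E : (\int[gamma]_(x in E) (cost x)%:E = gamma0 E + gamma1 E)%E.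
Proof.
have int_rho (nu : {finite_measure set (R3 R * R3 R)%type -> \bar R}) :
    nu `<< gamma -> gamma.-integrable E ('d (charge_of_finite_measure nu) '/d gamma).
  move=> nu_ac; apply: integrableS (subsetT _) _ => //.
  exact: Radon_Nikodym_fmeasure_integrable.
rewrite (ae_eq_integral (rho0 \+ rho1)%E) //; last 3 first.
- exact: measurable_funTS.
- by apply: emeasurable_funD; apply: measurable_funTS;
    exact: measurable_Radon_Nikodym_fmeasure.
- exact: cost_E_ae.
by rewrite integralD ?int_rho // -!Radon_Nikodym_fmeasure_integral.
Qed.

Lemma integral_cost : (\int[gamma]_(x in D) (cost x)%:E =
  (\sum_i (a i - \sum_j K0 i j) + \sum_j (b j - \sum_i K1 i j) +
   \sum_i \sum_j sqdist3 (Num.sqrt (K0 i j)) (u i) (Num.sqrt (K1 i j)) (v j))%:E)%E.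
Proof.
rewrite -(setDUK PQ_sub_D) ge0_integral_setU //; last 3 first.
- exact: measurable_funTS.
- by move=> x _; rewrite lee_fin sqdist3_ge0.
- by rewrite disj_set2E setDIK.
rewrite integral_cost_PQ integral_cost_E gamma0_E gamma1_E -!EFinD.
by congr EFin; exact: addrC.
Qed.

End cost.

End semicoupling.

Theorem lemma2p5 (R : realType) (m n : nat)
  (a : 'I_m -> R) (u : 'I_m -> R3 R) (b : 'I_n -> R) (v : 'I_n -> R3 R)
  (ha : forall i, 0 < a i) (hu : forall i, @S2 R (u i))
  (hb : forall j, 0 < b j) (hv : forall j, @S2 R (v j))
  (gamma0 gamma1 : {finite_measure set (R3 R * R3 R)%type -> \bar R})
  (hg0S : gamma0 (~` (@S2 R `*` @S2 R)) = 0%E)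
  (hg1S : gamma1 (~` (@S2 R `*` @S2 R)) = 0%E)
  (hg0 : forall X : set (R3 R), measurable X ->
     gamma0 (X `*` setT) = (\sum_(i < m) ((a i)%:E * \d_(u i) X))%E)
  (hg1 : forall Y : set (R3 R), measurable Y ->
     gamma1 (setT `*` Y) = (\sum_(j < n) ((b j)%:E * \d_(v j) Y))%E) :
  exists A B : 'M[R]_(m.+1, n.+1),
    discrete_semicoupling a b A B /\
    forall gamma : {sigma_finite_measure set (R3 R * R3 R)%type -> \bar R},
      gamma0 `<< gamma -> gamma1 `<< gamma ->
      (\int[gamma]_(x in @S2 R `*` @S2 R)
         (sqdist3
            (Num.sqrt (fine ('d (charge_of_finite_measure gamma0) '/d gamma x))) x.1
            (Num.sqrt (fine ('d (charge_of_finite_measure gamma1) '/d gamma x))) x.2)%:E)%E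
      = (\sum_(i < m.+1) \sum_(j < n.+1)
           sqdist3 (Num.sqrt (A i j)) (ext_pts u i) (Num.sqrt (B i j)) (ext_pts v j))%:E.
Proof.
pose K0 := atom_split gamma0 a u b v; pose K1 := atom_split gamma1 a u b v.
have K0_le : forall i, \sum_j K0 i j <= a i by apply: atom_split0_row_le.
have K1_le : forall j, \sum_i K1 i j <= b j by apply: atom_split1_col_le.
exists (slack_mx a K0), (slack_mx b (fun j i => K1 i j))^T; split.
  by apply: discrete_semicoupling_slack => //; exact: atom_split_ge0.
move=> gamma gamma0_ac gamma1_ac.
by rewrite sum_sqdist3_slack //; apply: integral_cost.
Qed.
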